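(* Let $q$ be a prime power with $q\equiv \pm1\pmod 5$, let $b\in\mathbb{F}_q$ be a root of $x^2+x-1$, let $\alpha\in\mathbb{F}_{q^5}$ be normal over $\mathbb{F}_q$, and let $f=x^2-bx+1$. Then $L_f(\alpha)+a$ is $2$-normal over $\mathbb{F}_q$ for every $a\in\mathbb{F}_q$ with the exception of at most one value of $a$.
   Context: For $h(x)=\sum_i a_ix^i\in\mathbb{F}_q[x]$, $L_h(\alpha)=\sum_i a_i\alpha^{q^i}$ for $\alpha\in\mathbb{F}_{q^5}$. An element $\alpha\in\mathbb{F}_{q^n}$ is normal over $\mathbb{F}_q$ if $\alpha,\alpha^q,\dots,\alpha^{q^{n-1}}$ form an $\mathbb{F}_q$-basis of $\mathbb{F}_{q^n}$. For $\alpha\in\mathbb{F}_{q^n}$ let $g_\alpha(x)=\sum_{i=0}^{n-1}\alpha^{q^i}x^{n-1-i}$; $\alpha$ is $k$-normal over $\mathbb{F}_q$ if $\gcd(x^n-1,g_\alpha(x))$ in $\mathbb{F}_{q^n}[x]$ has degree $k$ (here $n=5$). *)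

From HB Require Import structures.
From mathcomp Require Import all_boot all_order all_algebra all_field.
Set Implicit Arguments. Unset Strict Implicit. Unset Printing Implicit Defensive.
Import GRing.Theory.
Local Open Scope ring_scope.

(* F plays the role of F_q (q = #|F|), L is an extension field of F with
   [L : F] = n (here n = 5), i.e. L = F_{q^n}. *)

Definition frobq (F : finFieldType) (L : fieldExtType F) (i : nat) (x : L) : L :=
  x ^+ (#|F| ^ i).

Definition Lpoly (F : finFieldType) (L : fieldExtType F) (h : {poly F}) (x : L) : L :=
  \sum_(i < size h) h`_i *: frobq i x.

Definition normal_elt (F : finFieldType) (L : fieldExtType F) (x : L) : bool :=
  basis_of fullv [seq frobq i x | i <- iota 0 (\dim {:L})].

Definition g_poly (F : finFieldType) (L : fieldExtType F) (x : L) : {poly L} :=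
  \sum_(i < \dim {:L}) (frobq i x)%:P * 'X^(\dim {:L} - 1 - i).

Definition k_normal (F : finFieldType) (L : fieldExtType F) (k : nat) (x : L) : bool :=
  (size (gcdp ('X^(\dim {:L}) - 1) (g_poly x))).-1 == k.

(* Write g_x for g_poly x and N for X^n - 1. Multiplying g_x by X amounts,
   modulo N, to replacing x by x^q; hence g_(L_h(x)) = h g_x and
   g_c = c (1 + X + ... + X^(n-1)) modulo N, for c in F_q.
   If x is normal, g_x is coprime to N: otherwise H = N / gcd(N, g_x) has
   degree < n and H g_x = 0 modulo N, so the linearized polynomial
   sum_k H_k Y^(q^k) vanishes on the conjugates of x, hence on all of F_(q^n),
   which its degree q^(n-1) forbids.
   For n = 5 and b^2 + b - 1 = 0 we have 1 + X + ... + X^4 = f g with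
   g = X^2 + (1 + b) X + 1, so g_(L_f(x) + a) = f (g_x + a g) modulo N and
   gcd(N, g_(L_f(x) + a)) = f gcd((X - 1) g, g_x + a g). Since g divides N it
   is coprime to g_x + a g, and X - 1 divides g_x + a g only if
   g_x(1) + a g(1) = 0, which holds for at most one a because g_x(1) <> 0. *)

From HB Require Import structures.
From mathcomp Require Import all_boot all_order all_algebra all_field.
From mathcomp Require Import ring zify.
Set Implicit Arguments.
Unset Strict Implicit.
Unset Printing Implicit Defensive.

Import GRing.Theory.
Local Open Scope ring_scope.

Lemma eqp_gcdr_dvdp_sub (K : fieldType) (N p q : {poly K}) :
  N %| p - q -> gcdp N p %= gcdp N q.
Proof. by move=> /dvdpP[r pqE]; rewrite -(subrK q p) pqE gcdp_addl_mul. Qed.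

Lemma size_gcdp_mul2l_coprime (K : fieldType) (w u v : {poly K}) :
  w != 0 -> coprimep u v -> size (gcdp (w * u) (w * v)) = size w.
Proof.
move=> nz_w; rewrite coprimep_def => /eqP size_uv.
rewrite (eqp_size (gcdp_mul2l _ _ _)) size_mul ?size_uv ?addn1 //.
by rewrite -size_poly_eq0 size_uv.
Qed.

Lemma size_monic_quadratic (R : nzRingType) (u v : R) :
  size ('X^2 + u *: 'X + v%:P) = 3%N.
Proof.
by rewrite -mul_polyC expr2 -mulrDl size_MXaddC -size_poly_eq0 size_XaddC.
Qed.

Lemma sum_X5_factor (R : comNzRingType) (b : R) : b ^+ 2 + b - 1 = 0 ->
  \sum_(i < 5) 'X^i =
    ('X^2 - b *: 'X + 1) * ('X^2 + (1 + b) *: 'X + 1) :> {poly R}.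
Proof.
move=> hb; apply/eqP; rewrite -subr_eq0; apply/eqP.
transitivity ((b ^+ 2 + b - 1)%:P * 'X^2); last by rewrite hb mul0r.
rewrite !big_ord_recr big_ord0 /= -!mul_polyC.
by rewrite !(polyCD, polyCB) polyC_exp polyC1; ring.
Qed.

Section Frobenius.
Variables (F : finFieldType) (L : fieldExtType F).
Implicit Types (x y : L) (c : F).
Local Notation n := (\dim {:L}).

Lemma frobqD k x y : frobq k (x + y) = frobq k x + frobq k y.
Proof.
have [p p_pr charFp] := finPcharP F.
rewrite /frobq (card_pprimeChar charFp) -expnM exprDn_pchar // pnatX.
by rewrite (pnatE _ p_pr) (pchar_lalg L) charFp.
Qed.

Lemma frobq_is_zmod_morphism k : zmod_morphism (@frobq F L k).
Proof. by move=> x y; apply/(addIr (frobq k y)); rewrite -frobqD !subrK. Qed.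

Lemma frobq_is_monoid_morphism k : monoid_morphism (@frobq F L k).
Proof. by split=> [|x y]; rewrite /frobq ?expr1n ?exprMn. Qed.

HB.instance Definition _ k := GRing.isZmodMorphism.Build L L (frobq k)
  (frobq_is_zmod_morphism k).
HB.instance Definition _ k := GRing.isMonoidMorphism.Build L L (frobq k)
  (frobq_is_monoid_morphism k).

Lemma frobq_alg k c : frobq k (c%:A : L) = c%:A.
Proof.
elim: k => [|k IHk]; first by rewrite /frobq expn0 expr1.
by rewrite /frobq expnSr exprM -/(frobq k _) IHk -in_algE -rmorphXn expf_card.
Qed.

Lemma frobq_is_scalable k : scalable (@frobq F L k).
Proof.
by move=> c x; rewrite -[c *: x]mulr_algl rmorphM /= frobq_alg mulr_algl.
Qed.

HB.instance Definition _ k := GRing.isScalable.Build F L L *:%R (frobq k)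
  (frobq_is_scalable k).

Lemma frobq0 x : frobq 0 x = x.
Proof. by rewrite /frobq expn0 expr1. Qed.

Lemma frobq_comp j k x : frobq j (frobq k x) = frobq (j + k) x.
Proof. by rewrite /frobq -exprM -expnD addnC. Qed.

Lemma frobq_dim x : frobq n x = x.
Proof.
by apply/eqP; rewrite /frobq -(Fermat's_little_theorem (aspacef L)) memvf.
Qed.

Lemma max_poly_roots_fullv (P : {poly L}) :
  P != 0 -> (forall y, root P y) -> (#|F| ^ n < size P)%N.
Proof.
move=> nzP rootP; have cardL : #|finvect_type L| = (#|F| ^ n)%N.
  rewrite -(card_vspace (fullv : {vspace finvect_type L})).
  by apply: eq_card => y; rewrite memvf.
have rootsP : all (root P) (enum (finvect_type L)) by apply/allP=> y _.
by rewrite -cardL cardE (@max_poly_roots L P _ nzP rootsP (enum_uniq _)).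
Qed.

Lemma linearized_poly_eq0 (H : {poly L}) : (size H <= n)%N ->
  (forall y, \sum_(k < n) H`_k * frobq k y = 0) -> H = 0.
Proof.
move=> le_Hn Hy0; have q_gt1 := finNzRing_gt1 F.
pose P := \sum_(k < n) H`_k *: 'X^(#|F| ^ k).
have coefP k : (k < n)%N -> P`_(#|F| ^ k) = H`_k.
  move=> lt_kn; rewrite coef_sum (bigD1 (Ordinal lt_kn)) //=.
  rewrite coefZ coefXn eqxx mulr1.
  rewrite big1 ?addr0 // => j ne_jk; rewrite coefZ coefXn eqn_exp2l //.
  have /negbTE -> : k != j by apply: contra ne_jk => /eqP kj; apply/eqP/val_inj.
  by rewrite mulr0.
have P0 : P = 0.
  apply: contraTeq (_ : size P <= #|F| ^ n)%N => [nzP|].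
    rewrite -ltnNge max_poly_roots_fullv // => y.
    rewrite /root horner_sum; under eq_bigr do rewrite hornerZ hornerXn.
    exact/eqP/Hy0.
  apply: leq_trans (size_sum _ _ _) _; apply/bigmax_leqP => k _.
  by rewrite (leq_trans (size_scale_leq _ _)) // size_polyXn ltn_exp2l.
apply/polyP=> k; rewrite coef0; case: (ltnP k n) => [lt_kn | le_nk].
  by rewrite -coefP // P0 coef0.
by rewrite nth_default // (leq_trans le_Hn).
Qed.

Lemma normal_frobq_sum_eq0 (H : {poly L}) x : normal_elt x ->
  (forall i, (i < n)%N -> \sum_(k < n) H`_k * frobq k (frobq i x) = 0) ->
  forall y, \sum_(k < n) H`_k * frobq k y = 0.
Proof.
move=> nx Hx0 y; set s := [seq frobq i x | i <- iota 0 n].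
have size_s : size s = n by rewrite size_map size_iota.
rewrite (coord_basis (X := in_tuple s) nx (memvf y)).
under eq_bigr do rewrite rmorph_sum mulr_sumr.
rewrite exchange_big /=; apply: big1 => i _.
have lt_in : (i < n)%N by rewrite -size_s.
rewrite (nth_map 0%N) ?size_iota // nth_iota // add0n.
under eq_bigr do rewrite linearZ -scalerAr.
by rewrite -scaler_sumr Hx0 ?scaler0.
Qed.

End Frobenius.

Section GPoly.
Variables (F : finFieldType) (L : fieldExtType F).
Implicit Types (x y : L) (c : F).
Local Notation n := (\dim {:L}).

Lemma g_polyE x : g_poly x = \poly_(i < n) frobq (n.-1 - i) x.
Proof.
rewrite poly_def /g_poly (reindex_inj rev_ord_inj) /=.
apply: eq_bigr => i _; rewrite mul_polyC; have lt_i := ltn_ord i.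
have -> : (n - i.+1 = n.-1 - i)%N by lia.
by have -> : (n - 1 - (n.-1 - i) = i)%N by lia.
Qed.

Lemma size_g_poly x : (size (g_poly x) <= n)%N.
Proof. by rewrite g_polyE size_poly. Qed.

Lemma g_poly_is_zmod_morphism : zmod_morphism (@g_poly F L).
Proof.
move=> x y; apply/polyP=> i; rewrite coefB !g_polyE !coef_poly.
by case: ifP; rewrite ?rmorphB ?subr0.
Qed.

HB.instance Definition _ := GRing.isZmodMorphism.Build L {poly L} (@g_poly F L)
  g_poly_is_zmod_morphism.

Lemma g_polyZ c x : g_poly (c *: x) = (c%:A)%:P * g_poly x.
Proof.
apply/polyP=> i; rewrite coefCM !g_polyE !coef_poly.
by case: ifP; rewrite ?mulr0 // linearZ mulr_algl.
Qed.

Lemma g_poly_alg c : g_poly (c%:A : L) = (c%:A)%:P * \sum_(i < n) 'X^i.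
Proof.
rewrite /g_poly; under eq_bigr do rewrite frobq_alg.
rewrite -big_distrr /= (reindex_inj rev_ord_inj) /=; congr (_ * _).
apply: eq_bigr => i _; have lt_i := ltn_ord i.
by have -> : (n - 1 - (n - i.+1) = i)%N by lia.
Qed.

Lemma mulX_g_poly x : 'X * g_poly x = g_poly (frobq 1 x) + x%:P * ('X^n - 1).
Proof.
have n_gt0 : (0 < n)%N := adim_gt0 fullv.
apply/polyP=> i; rewrite coefXM coefD coefCM coefB coefXn coefC.
rewrite !g_polyE !coef_poly frobq_comp; case: i => [|i] /=.
  rewrite n_gt0 subn0 addn1 prednK // frobq_dim eq_sym (gtn_eqF n_gt0).
  by rewrite sub0r mulrN1 subrr.
rewrite subr0; case: (ltngtP i.+1 n) => [lt_in|lt_ni|<-].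
- by rewrite mulr0 addr0; congr frobq; lia.
- by rewrite mulr0 addr0.
- by rewrite subnn frobq0 add0r mulr1.
Qed.

Lemma dvdp_g_poly_frobq k x :
  ('X^n - 1) %| 'X^k * g_poly x - g_poly (frobq k x).
Proof.
elim: k => [|k IHk]; first by rewrite expr0 mul1r frobq0 subrr dvdp0.
have := mulX_g_poly (frobq k x); rewrite frobq_comp add1n => XgE.
have -> : 'X^(k.+1) * g_poly x - g_poly (frobq k.+1 x) =
    'X * ('X^k * g_poly x - g_poly (frobq k x)) + (frobq k x)%:P * ('X^n - 1).
  by rewrite mulrBr XgE exprS mulrA; ring.
by rewrite dvdp_add ?dvdp_mull.
Qed.

Lemma dvdp_g_poly_sum m (c : nat -> L) x :
  ('X^n - 1) %| (\sum_(k < m) c k *: 'X^k) * g_poly x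
                 - \sum_(k < m) (c k)%:P * g_poly (frobq k x).
Proof.
rewrite mulr_suml -sumrB.
apply: (big_ind (fun p => 'X^n - 1 %| p)) => [|p q|k _].
- exact: dvdp0.
- exact: dvdp_add.
by rewrite -mul_polyC -mulrA -mulrBr dvdp_mull ?dvdp_g_poly_frobq.
Qed.

Lemma dvdp_g_poly_Lpoly (h : {poly F}) x :
  ('X^n - 1) %| map_poly (in_alg L) h * g_poly x - g_poly (Lpoly h x).
Proof.
have -> : g_poly (Lpoly h x) =
    \sum_(i < size h) ((h`_i)%:A)%:P * g_poly (frobq i x).
  by rewrite (raddf_sum (@g_poly F L)); apply: eq_bigr => i _; apply: g_polyZ.
by rewrite /map_poly poly_def; exact: (dvdp_g_poly_sum _ (fun k => (h`_k)%:A)).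
Qed.

Lemma dvdp_mul_g_poly_sum_eq0 (H : {poly L}) x :
  (size H <= n)%N -> ('X^n - 1) %| H * g_poly x ->
  forall i, (i < n)%N -> \sum_(k < n) H`_k * frobq k (frobq i x) = 0.
Proof.
move=> le_Hn dvd_HG i lt_in.
pose R := \sum_(k < n) (H`_k)%:P * g_poly (frobq k x).
have HE : H = \sum_(k < n) H`_k *: 'X^k.
  rewrite -poly_def; apply/polyP=> j; rewrite coef_poly.
  by case: ltnP => // le_nj; rewrite nth_default // (leq_trans le_Hn).
have dvd_R : 'X^n - 1 %| R.
  rewrite -(dvdp_subr R dvd_HG) [in H * _]HE.
  exact: (dvdp_g_poly_sum _ (fun k => H`_k)).
have R0 : R = 0.
  apply: contraTeq dvd_R => nzR; apply/negP=> /(dvdp_leq nzR); apply/negP.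
  rewrite -polyC1 size_XnsubC ?adim_gt0 // -leqNgt.
  apply: leq_trans (size_sum _ _ _) _; apply/bigmax_leqP => k _.
  by rewrite mul_polyC (leq_trans (size_scale_leq _ _)) ?size_g_poly.
transitivity R`_(n.-1 - i); last by rewrite R0 coef0.
have n_gt0 : (0 < n)%N := adim_gt0 fullv.
rewrite coef_sum; apply: eq_bigr => k _.
rewrite coefCM g_polyE coef_poly ifT; last by lia.
have -> : (n.-1 - (n.-1 - i) = i)%N by lia.
by rewrite !frobq_comp addnC.
Qed.

Lemma normal_coprimep x : normal_elt x -> coprimep ('X^n - 1) (g_poly x).
Proof.
move=> nx; apply: contraT => not_cop.
set N : {poly L} := 'X^n - 1; set d := gcdp N (g_poly x).
set H : {poly L} := N %/ d.
have size_N : size N = n.+1 by rewrite /N -polyC1 size_XnsubC ?adim_gt0.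
have nzN : N != 0 by rewrite -size_poly_eq0 size_N.
have nzd : d != 0 by rewrite gcdp_eq0 negb_and nzN.
have HdE : H * d = N := divpK (dvdp_gcdl N (g_poly x)).
have nzH : H != 0 by apply: contra_neq nzN; rewrite -HdE => ->; rewrite mul0r.
have le_Hn : (size H <= n)%N.
  have : size d != 1%N by rewrite -coprimep_def.
  have := size_mul nzH nzd; rewrite HdE size_N; rewrite -size_poly_gt0 in nzd.
  set sH := size H; lia.
have dvd_HG : N %| H * g_poly x.
  by rewrite -(divpK (dvdp_gcdr N (g_poly x))) -/d mulrCA HdE dvdp_mulIr.
have H0 : H = 0.
  apply: (linearized_poly_eq0 le_Hn); apply: (normal_frobq_sum_eq0 nx).
  exact: (dvdp_mul_g_poly_sum_eq0 le_Hn dvd_HG).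
by rewrite H0 eqxx in nzH.
Qed.

Lemma k_normal_Lpoly_add k (h : {poly F}) x c :
  k_normal k (Lpoly h x + c%:A) =
  ((size (gcdp ('X^n - 1) (map_poly (in_alg L) h * g_poly x
                           + (c%:A)%:P * \sum_(i < n) 'X^i))).-1 == k).
Proof.
rewrite /k_normal raddfD /= g_poly_alg; congr (_.-1 == k).
apply/eqp_size; rewrite eqp_sym; apply: eqp_gcdr_dvdp_sub.
by rewrite opprD addrACA subrr addr0 dvdp_g_poly_Lpoly.
Qed.
End GPoly.

Lemma card_affine_roots_le1 (F : finFieldType) (L : fieldExtType F)
    (u v : L) :
  u != 0 -> (#|[set c : F | (u + c%:A * v == 0)%R]| <= 1)%N.
Proof.
move=> nz_u; apply/card_le1_eqP => c1 c2; rewrite !inE => /eqP uv1 /eqP uv2.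
have nz_v : v != 0 by apply: contra_neq nz_u => v0; rewrite -uv1 v0 mulr0 addr0.
have : c2%:A * v = c1%:A * v by apply: (addrI u); rewrite uv1 uv2.
by move/(mulIf nz_v)/(fmorph_inj (in_alg L)).
Qed.

Lemma k_normal2_Lpoly_add (F : finFieldType) (L : fieldExtType F)
    (b c : F) (x : L) :
  \dim {:L} = 5%N -> b ^+ 2 + b - 1 = 0 -> coprimep ('X^5 - 1) (g_poly x) ->
  ~~ root (g_poly x + (c%:A)%:P * ('X^2 + (1 + b%:A) *: 'X + 1)) 1 ->
  k_normal 2 (Lpoly ('X^2 - b *: 'X + 1) x + c%:A).
Proof.
move=> dimL5 hb cop not_root.
set fL : {poly L} := 'X^2 - b%:A *: 'X + 1.
set gL : {poly L} := 'X^2 + (1 + b%:A) *: 'X + 1.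
have hbL : (b%:A : L) ^+ 2 + b%:A - 1 = 0.
  rewrite -in_algE -rmorphXn -rmorphD -(rmorph1 (in_alg L)) -rmorphB.
  by rewrite hb rmorph0.
have fLE : map_poly (in_alg L) ('X^2 - b *: 'X + 1) = fL.
  by rewrite rmorphD rmorphB /= map_polyXn map_polyZ map_polyX rmorph1.
have NE : 'X^5 - 1 = fL * (('X - 1%:P) * gL).
  by rewrite polyC1 subrX1 (sum_X5_factor hbL) mulrCA.
have size_fL : size fL = 3%N.
  by rewrite /fL -scaleNr -polyC1 size_monic_quadratic.
rewrite k_normal_Lpoly_add dimL5 fLE (sum_X5_factor hbL) NE -/fL -/gL.
rewrite (mulrCA (c%:A)%:P) -mulrDr size_gcdp_mul2l_coprime ?size_fL //.
  by rewrite -size_poly_eq0 size_fL.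
rewrite coprimepMl coprimep_sym coprimep_XsubC not_root /=.
rewrite addrC coprimep_addl_mul (coprimep_dvdr (r := gL) _ cop) //.
by rewrite NE mulrA dvdp_mulIr.
Qed.

Theorem lemma6p14 (F : finFieldType) (L : fieldExtType F)
  (hdim : \dim {:L} = 5%N)
  (hq : (#|F| %% 5 == 1)%N || (#|F| %% 5 == 4)%N)
  (b : F) (hb : b ^+ 2 + b - 1 = 0)
  (alpha : L) (halpha : normal_elt alpha) :
  (#|[set a : F | ~~ k_normal 2 (Lpoly ('X^2 - b *: 'X + 1) alpha + a%:A)]| <= 1)%N.
Proof.
set G := g_poly alpha; set gL : {poly L} := 'X^2 + (1 + b%:A) *: 'X + 1.
have cop : coprimep ('X^5 - 1) G by rewrite -hdim normal_coprimep.
have nz_G1 : G.[1] != 0.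
  rewrite -rootE -coprimep_XsubC coprimep_sym (coprimep_dvdr _ cop) //.
  by rewrite polyC1 subrX1 dvdp_mulIl.
apply: leq_trans (card_affine_roots_le1 gL.[1] nz_G1).
apply/subset_leq_card/subsetP=> a; rewrite !inE; apply: contraR => not_root.
by apply: k_normal2_Lpoly_add; rewrite // /root hornerD hornerCM.
Qed.
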